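(* Let $\mathcal{G}$ be a Fischer space of symplectic type and let $\ell=\{a,b,c\}$ be a line. Suppose $\ell$ lies in two different complete quadrilaterals $\pi$ and $\pi'$, where $\pi$ has points $a,b,c,x,y,z$ and lines $\{a,b,c\},\{a,y,z\},\{b,x,z\},\{c,x,y\}$, and $\pi'$ has points $a,b,c,p,q,r$ and lines $\{a,b,c\},\{a,q,r\},\{b,p,r\},\{c,p,q\}$. Then exactly one of the following two cases occurs: (a) $p\sim x$, $q\sim y$, $r\sim z$, and $p\not\sim y$, $p\not\sim z$, $q\not\sim x$, $q\not\sim z$, $r\not\sim x$, $r\not\sim y$. In this case $w:=p\wedge x=q\wedge y=r\wedge z$, and $w$ is not collinear with any of $a,b,c$. (b) $p\not\sim x$, $q\not\sim y$, $r\not\sim z$, and $p\sim y$, $p\sim z$, $q\sim x$, $q\sim z$, $r\sim x$, $r\sim y$. In this case $d:=r\wedge y=q\wedge z$, $e:=r\wedge x=p\wedge z$, $f:=q\wedge x=p\wedge y$; the triples $\{a,e,f\},\{b,d,f\},\{c,d,e\}$ are lines, and the points $a,b,c,d,e,f$ form another complete quadrilateral $\pi''$ containing $\ell$.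
   Context: A 3-transposition group is a pair $(G,D)$ where $D$ is a conjugacy class of involutions generating $G$ with $de$ of order at most $3$ for all $d,e\in D$. Its Fischer space has point set $D$ and as lines the $3$-subsets consisting of the three involutions of a subgroup isomorphic to $\mathrm{Sym}(3)$. Distinct points on a common line are collinear ($p\sim q$), and $p\wedge q$ is the third point of that line. A subspace is a nonempty subset closed under $\wedge$. The subspace generated by two distinct intersecting lines is either a complete quadrilateral (6 points, 4 lines, any two lines meeting in one point, each point on two lines) or an affine plane of order $3$; the Fischer space is of symplectic type if it is always a complete quadrilateral. A complete quadrilateral in $\mathcal{G}$ means a subspace isomorphic to it. *)

From mathcomp Require Import all_boot all_fingroup.
Set Implicit Arguments. Unset Strict Implicit. Unset Printing Implicit Defensive.

(* An abstract (possibly infinite) group on a carrier type T. *)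
Record group_on (T : Type) := GroupOn {
  gmul : T -> T -> T;
  ginv : T -> T;
  gone : T;
  gmulA : forall x y z, gmul x (gmul y z) = gmul (gmul x y) z;
  gmul1 : forall x, gmul gone x = x;
  gmulV : forall x, gmul (ginv x) x = gone
}.

Section Fischer.
Variables (T : Type) (G : group_on T) (D : T -> Prop).

Fixpoint gpow (x : T) (n : nat) : T :=
  match n with 0 => gone G | n'.+1 => gmul G x (gpow x n') end.

Definition involution (t : T) : Prop := t <> gone G /\ gmul G t t = gone G.

(* (G, D) is a 3-transposition group: D is a conjugacy class of involutions
   generating G (G = the whole carrier T), and de has order at most 3. *)
Definition three_transposition_group : Prop :=
  [/\ (exists d0, forall t, D t <-> exists g, t = gmul G (ginv G g) (gmul G d0 g)),
      (forall t, D t -> involution t),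
      (forall S : T -> Prop, S (gone G) ->
          (forall x y, S x -> S y -> S (gmul G x y)) ->
          (forall x, S x -> S (ginv G x)) ->
          (forall x, D x -> S x) -> forall t, S t) &
      (forall d e, D d -> D e ->
          exists n, [/\ 1 <= n, n <= 3 & gpow (gmul G d e) n = gone G])].

Definition S3_embedding (f : {perm 'I_3} -> T) : Prop :=
  injective f /\ forall s u : {perm 'I_3}, f (s * u)%g = gmul G (f s) (f u).

Definition perm_involution (s : {perm 'I_3}) : bool := (s != 1%g) && (s * s == 1)%g.

(* {a,b,c} is a line of the Fischer space: a 3-subset of D consisting of the
   three involutions of a subgroup isomorphic to Sym(3). *)
Definition fline (a b c : T) : Prop :=
  [/\ D a, D b, D c &
   exists f, S3_embedding f /\
     forall t, (t = a \/ t = b \/ t = c) <-> exists2 s, perm_involution s & f s = t].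

Definition coll (p q : T) : Prop := p <> q /\ exists w, fline p q w.

Definition subspace (S : T -> Prop) : Prop :=
  [/\ exists t, S t, (forall t, S t -> D t) &
      forall u v w, S u -> S v -> fline u v w -> S w].

Definition triple_eq (u v w a b c : T) : Prop :=
  forall t, (t = u \/ t = v \/ t = w) <-> (t = a \/ t = b \/ t = c).

Definition six (a b c x y z : T) : T -> Prop :=
  fun t => t = a \/ t = b \/ t = c \/ t = x \/ t = y \/ t = z.

Definition cquad (a b c x y z : T) : Prop :=
  [/\ (a <> b /\ a <> c /\ a <> x /\ a <> y /\ a <> z /\ b <> c /\ b <> x /\
       b <> y /\ b <> z /\ c <> x /\ c <> y /\ c <> z /\ x <> y /\ x <> z /\ y <> z),
      fline a b c /\ fline a y z /\ fline b x z /\ fline c x y,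
      subspace (six a b c x y z) &
      forall u v w, six a b c x y z u -> six a b c x y z v -> six a b c x y z w ->
        fline u v w ->
        triple_eq u v w a b c \/ triple_eq u v w a y z \/
        triple_eq u v w b x z \/ triple_eq u v w c x y].

Definition is_cquad (S : T -> Prop) : Prop :=
  exists a b c x y z, cquad a b c x y z /\ forall t, S t <-> six a b c x y z t.

Definition generated (A : T -> Prop) : T -> Prop :=
  fun t => forall S, subspace S -> (forall u, A u -> S u) -> S t.

Definition symplectic : Prop :=
  forall a b c d e, fline a b c -> fline a d e -> ~ triple_eq a b c a d e ->
    is_cquad (generated (fun t => t = a \/ t = b \/ t = c \/ t = d \/ t = e)).

End Fischer.

From mathcomp Require Import all_boot all_fingroup.
From Stdlib Require Import Classical.
Set Implicit Arguments. Unset Strict Implicit. Unset Printing Implicit Defensive.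

(** In a Fischer space of symplectic type the third point of a line is unique,
   and two distinct lines through a point span a complete quadrilateral, in
   which opposite points are not collinear.  At the vertex c the lines
   {c,p,q} and {c,x,y} therefore span a quadrilateral with a new point s whose
   other lines are either {p,x,s}, {q,y,s} (and then p, y and q, x are
   opposite) or {p,y,s}, {q,x,s} (and then p, x and q, y are opposite).  The
   same holds at a and b, and whether p ~ x decides the orientation at all
   three vertices at once.  In case (a) the three new points coincide, by
   uniqueness of third points.  In case (b) they are d, e, f; the line
   {a,e,f} is the fourth side of the quadrilateral spanned by the lines
   {x,r,e} and {x,q,f} through x, whose third side {r,q} passes through a, and
   similarly for {b,d,f} and {c,d,e}; finally {a,b,c} and {a,e,f} span π''. *)

Lemma tperm_involution (i j : 'I_3) : i != j -> perm_involution (tperm i j).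
Proof.
move=> ij; rewrite /perm_involution tperm2 eqxx andbT.
by apply: contra ij => /eqP/permP/(_ i); rewrite tpermL perm1 => ->.
Qed.

Lemma three_involutions : exists s1 s2 s3 : {perm 'I_3},
  [/\ perm_involution s1, perm_involution s2, perm_involution s3 &
      [/\ s1 <> s2, s1 <> s3 & s2 <> s3]].
Proof.
pose i0 := @Ordinal 3 0 isT; pose i1 := @Ordinal 3 1 isT; pose i2 := @Ordinal 3 2 isT.
exists (tperm i0 i1), (tperm i0 i2), (tperm i1 i2).
rewrite !tperm_involution //; split=> //.
by split=> /permP/(_ i0); rewrite ?tpermL ?tpermD // => /(congr1 val).
Qed.

Section FischerSpace.
Variables (T : Type) (G : group_on T) (D : T -> Prop).

Lemma fline_neq a b c : fline G D a b c -> a <> b.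
Proof.
case=> _ _ _ [f [[f_inj _] f_inv]] eq_ab; subst b.
have [s1 [s2 [s3 [i1 i2 i3 [n12 n13 n23]]]]] := three_involutions.
have img s : perm_involution s -> f s = a \/ f s = c.
  by move=> s_inv; have := proj2 (f_inv (f s)) (ex_intro2 _ _ s s_inv erefl); tauto.
have f12 : f s1 <> f s2 by move/f_inj.
have f13 : f s1 <> f s3 by move/f_inj.
have f23 : f s2 <> f s3 by move/f_inj.
by case: (img _ i1) => e1; case: (img _ i2) => e2; case: (img _ i3) => e3; congruence.
Qed.

Lemma fline_perm12 a b c : fline G D a b c -> fline G D b a c.
Proof. by case=> ? ? ? [f [? f_inv]]; split=> //; exists f; split=> // t; rewrite -f_inv; tauto. Qed.

Lemma fline_perm23 a b c : fline G D a b c -> fline G D a c b.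
Proof. by case=> ? ? ? [f [? f_inv]]; split=> //; exists f; split=> // t; rewrite -f_inv; tauto. Qed.

Ltac perm3 p12 p23 :=
  first [ eassumption
        | eapply p12; eassumption
        | eapply p23; eassumption
        | eapply p12; eapply p23; eassumption
        | eapply p23; eapply p12; eassumption
        | eapply p12; eapply p23; eapply p12; eassumption ].

Ltac fline_perm := perm3 fline_perm12 fline_perm23.

Lemma fline_distinct a b c : fline G D a b c -> [/\ a <> b, a <> c & b <> c].
Proof.
move=> l; split; [exact: fline_neq l | apply: (@fline_neq a c b) | apply: (@fline_neq b c a)];
  fline_perm.
Qed.

Lemma fline_coll u v w : fline G D u v w -> coll G D u v.
Proof. by move=> l; split; [exact: fline_neq l | exists w]. Qed.

Lemma coll_sym u v : coll G D u v -> coll G D v u.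
Proof. by case=> ne [w l]; split; [exact: nesym | exists w; fline_perm]. Qed.

Lemma ncoll_sym u v : ~ coll G D u v -> ~ coll G D v u.
Proof. by move=> nuv /coll_sym. Qed.

Lemma subspace_ext (S S' : T -> Prop) :
  (forall t, S t <-> S' t) -> subspace G D S -> subspace G D S'.
Proof.
move=> eqS [[t St] SD S_closed]; split.
- by exists t; apply/eqS.
- by move=> u /eqS; apply: SD.
- by move=> u v w /eqS Su /eqS Sv l; apply/eqS; apply: S_closed l.
Qed.

Lemma triple_eq_perm12 (u v w a b c : T) : triple_eq u v w a b c -> triple_eq u v w b a c.
Proof. by move=> E t; rewrite E; tauto. Qed.

Lemma triple_eq_perm23 (u v w a b c : T) : triple_eq u v w a b c -> triple_eq u v w a c b.
Proof. by move=> E t; rewrite E; tauto. Qed.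

Ltac triple_perm := perm3 triple_eq_perm12 triple_eq_perm23.

Ltac pick_triple :=
  first [ left; triple_perm | right; pick_triple | triple_perm ].

(* The lines of [cquad a b c x y z] are numbered 1: {a,b,c}, 2: {a,y,z},
   3: {b,x,z}, 4: {c,x,y}; [cquad_swapij] renames the points so as to exchange
   lines i and j, and [cquad_rot] cycles lines 2, 3, 4. *)
Ltac cquad_relabel :=
  let dist := fresh "dist" in let sub := fresh "sub" in
  let closed := fresh "closed" in
  let Hu := fresh "Hu" in let Hv := fresh "Hv" in let Hw := fresh "Hw" in
  let l := fresh "l" in
  case=> dist [? [? [? ?]]] sub closed; split;
  [ decompose [and] dist; repeat split; congruence
  | split; [|split; [|split]]; fline_perm
  | apply: subspace_ext sub => ?; rewrite /six; tauto
  | move=> ? ? ? Hu Hv Hw l; move: closed => /(_ _ _ _ _ _ _ l);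
    rewrite /six in Hu Hv Hw *;
    move=> /(_ ltac:(clear -Hu; tauto) ltac:(clear -Hv; tauto) ltac:(clear -Hw; tauto));
    case=> [?|[?|[?|?]]]; pick_triple ].

Lemma cquad_swap12 a b c x y z : cquad G D a b c x y z -> cquad G D a z y x c b.
Proof. cquad_relabel. Qed.

Lemma cquad_swap23 a b c x y z : cquad G D a b c x y z -> cquad G D b a c y x z.
Proof. cquad_relabel. Qed.

Lemma cquad_swap34 a b c x y z : cquad G D a b c x y z -> cquad G D a c b x z y.
Proof. cquad_relabel. Qed.

Lemma cquad_swap13 a b c x y z : cquad G D a b c x y z -> cquad G D z b x c y a.
Proof. by move/cquad_swap23/cquad_swap12/cquad_swap23. Qed.

Lemma cquad_swap14 a b c x y z : cquad G D a b c x y z -> cquad G D y x c b a z.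
Proof. by move/cquad_swap34/cquad_swap13/cquad_swap34. Qed.

Lemma cquad_rot a b c x y z : cquad G D a b c x y z -> cquad G D b c a y z x.
Proof. by move/cquad_swap23/cquad_swap34. Qed.

Lemma cquad_lines a b c x y z : cquad G D a b c x y z ->
  [/\ fline G D a b c, fline G D a y z, fline G D b x z & fline G D c x y].
Proof. by case=> _ [? [? [? ?]]]. Qed.

Lemma cquad_opposite_neq a b c x y z : cquad G D a b c x y z ->
  [/\ a <> x, b <> y & c <> z].
Proof. by case=> dist _ _ _; decompose [and] dist. Qed.

Lemma triple_eq_mem (u v w a b c : T) : triple_eq u v w a b c ->
  [/\ u = a \/ u = b \/ u = c, v = a \/ v = b \/ v = c & w = a \/ w = b \/ w = c].
Proof. by move=> E; split; apply/E; tauto. Qed.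

Ltac line_cases H :=
  case: H => [H|[H|[H|H]]]; case: (triple_eq_mem H) => [[?|[?|?]] [?|[?|?]] [?|[?|?]]].

Lemma cquad_line_in a b c x y z u v w : cquad G D a b c x y z ->
  fline G D u v w -> six a b c x y z u -> six a b c x y z v ->
  [/\ six a b c x y z w &
      triple_eq u v w a b c \/ triple_eq u v w a y z \/
      triple_eq u v w b x z \/ triple_eq u v w c x y].
Proof.
case=> _ _ [_ _ sub_closed] closed l Su Sv.
have Sw := sub_closed u v w Su Sv l.
by split; last exact: closed l.
Qed.

Lemma cquad_opposite_ncoll a b c x y z : cquad G D a b c x y z -> ~ coll G D a x.
Proof.
move=> Q [nax [w l]].
have [_ H] := cquad_line_in Q l (or_introl erefl) ltac:(rewrite /six; tauto).
case: Q => dist _ _ _; decompose [and] dist.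
line_cases H; congruence.
Qed.

Lemma cquad_ncoll a b c x y z : cquad G D a b c x y z ->
  [/\ ~ coll G D a x, ~ coll G D b y & ~ coll G D c z].
Proof.
move=> Q; split; apply: cquad_opposite_ncoll; [exact: Q | exact: cquad_rot Q |].
exact: cquad_rot (cquad_rot Q).
Qed.

Lemma cquad_third a b c x y z w : cquad G D a b c x y z ->
  fline G D a b w -> six a b c x y z w -> w = c.
Proof.
move=> Q l Sw; have [nab naw nbw] := fline_distinct l.
have [_ H] := cquad_line_in Q l (or_introl erefl) ltac:(rewrite /six; tauto).
case: Q => dist _ _ _; decompose [and] dist.
line_cases H; congruence.
Qed.

Lemma cquad_line_through_first a b c x y z d e : cquad G D a b c x y z ->
  fline G D a d e -> six a b c x y z d -> six a b c x y z e -> b <> d -> b <> e ->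
  d = y /\ e = z \/ d = z /\ e = y.
Proof.
move=> Q l Sd Se nbd nbe; have [nad nae nde] := fline_distinct l.
have [_ H] := cquad_line_in Q l (or_introl erefl) Sd.
case: Q => dist _ _ _; decompose [and] dist.
line_cases H; solve [congruence | left; split; congruence | right; split; congruence].
Qed.

Ltac exists_relabel Q :=
  do 3 eexists; split; [exact: Q | move=> ?; rewrite /six; tauto].

Lemma cquad_reorder_first_line a b c x y z u v w : cquad G D a b c x y z ->
  triple_eq u v w a b c -> fline G D u v w ->
  exists x' y' z', cquad G D u v w x' y' z' /\
    forall t, six a b c x y z t <-> six u v w x' y' z' t.
Proof.
move=> Q E l; have [nuv nuw nvw] := fline_distinct l.
have [dist _ _ _] := Q; decompose [and] dist.
case: (triple_eq_mem E) => [[?|[?|?]] [?|[?|?]] [?|[?|?]]]; try congruence; subst u v w;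
  first [ exists_relabel Q | exists_relabel (cquad_swap23 Q) | exists_relabel (cquad_swap34 Q)
        | exists_relabel (cquad_rot Q) | exists_relabel (cquad_rot (cquad_rot Q))
        | exists_relabel (cquad_swap23 (cquad_rot Q)) ].
Qed.

Lemma cquad_from_line a b c x y z u v w : cquad G D a b c x y z ->
  fline G D u v w -> six a b c x y z u -> six a b c x y z v -> six a b c x y z w ->
  exists x' y' z', cquad G D u v w x' y' z' /\
    forall t, six a b c x y z t <-> six u v w x' y' z' t.
Proof.
move=> Q l Su Sv Sw; have [_ H] := cquad_line_in Q l Su Sv.
suff [a' [b' [c' [x' [y' [z' [Q' E same]]]]]]] : exists a' b' c' x' y' z',
    [/\ cquad G D a' b' c' x' y' z', triple_eq u v w a' b' c' &
         forall t, six a b c x y z t <-> six a' b' c' x' y' z' t].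
  have [x'' [y'' [z'' [Q'' same']]]] := cquad_reorder_first_line Q' E l.
  by exists x'', y'', z''; split=> // t; apply: iff_trans (same t) (same' t).
case: H => [E|[E|[E|E]]];
  [exists a, b, c, x, y, z | exists a, z, y, x, c, b | exists z, b, x, c, y, a | exists y, x, c, b, a, z];
  (split; [ first [ exact: Q | exact: cquad_swap12 Q | exact: cquad_swap13 Q
                   | exact: cquad_swap14 Q ]
           | triple_perm
           | move=> ?; rewrite /six; tauto ]).
Qed.

Hypothesis symp : symplectic G D.

Lemma cquad_on_two_lines a b c d e :
  fline G D a b c -> fline G D a d e -> ~ triple_eq a b c a d e ->
  exists x y z, [/\ cquad G D a b c x y z, six a b c x y z d & six a b c x y z e].
Proof.
move=> l1 l2 ne; have [a' [b' [c' [x' [y' [z' [Q E]]]]]]] := symp l1 l2 ne.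
have gen t : t = a \/ t = b \/ t = c \/ t = d \/ t = e -> six a' b' c' x' y' z' t.
  by move=> At; apply/E => S _; apply.
have [|||x [y [z [Q' same]]]] := cquad_from_line Q l1; try by apply: gen; tauto.
by exists x, y, z; split=> //; apply/same/gen; tauto.
Qed.

Lemma fline_third_uniq u v w w' : fline G D u v w -> fline G D u v w' -> w = w'.
Proof.
move=> l l'; apply: NNPP => nww'; have [nuv nuw nvw] := fline_distinct l.
have [|x [y [z [Q _ Sw']]]] := cquad_on_two_lines l l'.
  by move=> /(_ w) [/(_ (or_intror (or_intror erefl)))]; intuition congruence.
by apply: nww'; symmetry; apply: cquad_third Q l' Sw'.
Qed.

Lemma cquad_of_intersecting_lines a b c d e : fline G D a b c -> fline G D a d e -> b <> d -> b <> e ->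
  exists g, cquad G D a b c g d e \/ cquad G D a b c g e d.
Proof.
move=> l1 l2 nbd nbe; have [nab _ _] := fline_distinct l1.
have [|x [y [z [Q Sd Se]]]] := cquad_on_two_lines l1 l2.
  by move=> /(_ b) [/(_ (or_intror (or_introl erefl)))]; intuition congruence.
by exists x; case: (cquad_line_through_first Q l2 Sd Se nbd nbe) => [[-> ->]|[-> ->]]; [left|right].
Qed.

Lemma cquad_of_three_lines a b c d e f : fline G D a b c -> fline G D a e f -> fline G D b d f ->
  b <> e -> cquad G D a b c d e f.
Proof.
move=> l1 l2 l3 nbe; have [_ nbf _] := fline_distinct l3.
have [g [Q|Q]] := cquad_of_intersecting_lines l1 l2 nbe nbf.
- have [_ _ l4 _] := cquad_lines Q.
  suff -> : d = g by [].
  by apply: (fline_third_uniq (u := b) (v := f)); fline_perm.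
- have [_ nbf' _] := cquad_ncoll Q.
  by case: nbf'; apply: (fline_coll (w := d)); fline_perm.
Qed.

Lemma fline_fourth_side x r e q f a : fline G D x r e -> fline G D x q f -> fline G D a q r ->
  x <> a -> fline G D a e f.
Proof.
move=> l1 l2 l3 nxa.
have nrf : r <> f.
  by move=> rf; subst f; apply: nxa; apply: (fline_third_uniq (u := q) (v := r)); fline_perm.
have l4 : fline G D r a q by fline_perm.
have [_ _ _ l] := cquad_lines (cquad_of_three_lines l1 (fline_perm23 l2) l4 nrf).
by fline_perm.
Qed.

Lemma cquad_eq_of_opposite a b c x y z p q r :
  cquad G D a b c x y z -> cquad G D a b c p q r -> p = x -> q = y /\ r = z.
Proof.
move=> Q1 Q2 px; subst p.
have [_ _ l1 l2] := cquad_lines Q1; have [_ _ l3 l4] := cquad_lines Q2.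
by split; [apply: (fline_third_uniq (u := c) (v := x)) | apply: (fline_third_uniq (u := b) (v := x))];
  fline_perm.
Qed.

Lemma vertex_cquad a b c x y z p q r :
  cquad G D a b c x y z -> cquad G D a b c p q r -> p <> x ->
  exists s, cquad G D c p q s x y \/ cquad G D c p q s y x.
Proof.
move=> Q1 Q2 npx; have [_ _ _ l1] := cquad_lines Q1; have [_ _ l2 l3] := cquad_lines Q2.
apply: cquad_of_intersecting_lines => //.
move=> py; subst p; have [_ nby _] := cquad_ncoll Q1.
by apply: nby; apply: (fline_coll (w := r)); fline_perm.
Qed.

Lemma vertex_cquad_coll a b c x y z p q r :
  cquad G D a b c x y z -> cquad G D a b c p q r -> coll G D p x ->
  exists s, cquad G D c p q s y x.
Proof.
move=> Q1 Q2 px; have [s [K|K]] := vertex_cquad Q1 Q2 (proj1 px); last by exists s.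
by have [_ npx _] := cquad_ncoll K.
Qed.

Lemma vertex_cquad_ncoll a b c x y z p q r :
  cquad G D a b c x y z -> cquad G D a b c p q r -> p <> x -> ~ coll G D p x ->
  exists s, cquad G D c p q s x y.
Proof.
move=> Q1 Q2 ne_px npx; have [s [K|K]] := vertex_cquad Q1 Q2 ne_px; first by exists s.
have [_ _ l _] := cquad_lines K.
by case: npx; apply: (fline_coll (w := s)); fline_perm.
Qed.

Ltac coll_perm := eapply fline_coll; fline_perm.
Ltac ncoll_perm := first [ assumption | apply: ncoll_sym; assumption ].

Definition case_a a b c x y z p q r : Prop :=
  [/\ coll G D p x /\ coll G D q y /\ coll G D r z,
      ~ coll G D p y /\ ~ coll G D p z /\ ~ coll G D q x /\
      ~ coll G D q z /\ ~ coll G D r x /\ ~ coll G D r y &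
      exists w, [/\ fline G D p x w, fline G D q y w, fline G D r z w &
                    ~ coll G D w a /\ ~ coll G D w b /\ ~ coll G D w c]].

Definition case_b a b c x y z p q r : Prop :=
  [/\ ~ coll G D p x /\ ~ coll G D q y /\ ~ coll G D r z,
      coll G D p y /\ coll G D p z /\ coll G D q x /\
      coll G D q z /\ coll G D r x /\ coll G D r y &
      exists d e f,
        [/\ fline G D r y d /\ fline G D q z d,
            fline G D r x e /\ fline G D p z e,
            fline G D q x f /\ fline G D p y f,
            fline G D a e f /\ fline G D b d f /\ fline G D c d e &
            cquad G D a b c d e f]].

Lemma case_a_of_coll a b c x y z p q r :
  cquad G D a b c x y z -> cquad G D a b c p q r -> coll G D p x ->
  case_a a b c x y z p q r.
Proof.
move=> Q1 Q2 px.
have [s Kc] := vertex_cquad_coll Q1 Q2 px.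
have [_ _ l_pxs l_qys] := cquad_lines Kc.
have qy : coll G D q y by coll_perm.
have [t Ka] := vertex_cquad_coll (cquad_rot Q1) (cquad_rot Q2) qy.
have [_ _ l_qyt l_rzt] := cquad_lines Ka.
have rz : coll G D r z by coll_perm.
have [u Kb] := vertex_cquad_coll (cquad_rot (cquad_rot Q1)) (cquad_rot (cquad_rot Q2)) rz.
have [_ _ l_rzu l_pxu] := cquad_lines Kb.
have ts : t = s by apply: (fline_third_uniq (u := q) (v := y)); fline_perm.
have us : u = s by apply: (fline_third_uniq (u := p) (v := x)); fline_perm.
subst t u.
have [ncs npy nqx] := cquad_ncoll Kc.
have [nas nqz nry] := cquad_ncoll Ka.
have [nbs nrx npz] := cquad_ncoll Kb.
split; first by [].
- by do !split; ncoll_perm.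
- by exists s; split; try fline_perm; do !split; ncoll_perm.
Qed.

Lemma case_b_of_ncoll a b c x y z p q r :
  cquad G D a b c x y z -> cquad G D a b c p q r -> p <> x -> ~ coll G D p x ->
  case_b a b c x y z p q r.
Proof.
move=> Q1 Q2 ne_px npx.
have [s Kc] := vertex_cquad_ncoll Q1 Q2 ne_px npx.
have [_ _ l_pys l_qxs] := cquad_lines Kc.
have [_ _ ne_qy] := cquad_opposite_neq Kc; have [_ _ nqy] := cquad_ncoll Kc.
have [t Ka] := vertex_cquad_ncoll (cquad_rot Q1) (cquad_rot Q2) ne_qy nqy.
have [_ _ l_qzt l_ryt] := cquad_lines Ka.
have [_ _ ne_rz] := cquad_opposite_neq Ka; have [_ _ nrz] := cquad_ncoll Ka.
have [u Kb] := vertex_cquad_ncoll (cquad_rot (cquad_rot Q1)) (cquad_rot (cquad_rot Q2)) ne_rz nrz.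
have [_ _ l_rxu l_pzu] := cquad_lines Kb.
have [ne_bu _ _] := cquad_opposite_neq Kb.
have [l_abc _ _ _] := cquad_lines Q1; have [_ l_aqr l_bpr l_cpq] := cquad_lines Q2.
have [ne_ax ne_by ne_cz] := cquad_opposite_neq Q1.
have l_aus : fline G D a u s.
  by apply: (fline_fourth_side (x := x) (r := r) (q := q)); try fline_perm; exact: nesym.
have l_bts : fline G D b t s.
  by apply: (fline_fourth_side (x := y) (r := r) (q := p)); try fline_perm; exact: nesym.
have l_ctu : fline G D c t u.
  by apply: (fline_fourth_side (x := z) (r := q) (q := p)); try fline_perm; exact: nesym.
split; first by [].
- by do !split; coll_perm.
- exists t, u, s; split; try (split; fline_perm); first by split; [|split]; fline_perm.
  exact: cquad_of_three_lines l_abc l_aus l_bts ne_bu.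
Qed.

End FischerSpace.

Theorem proposition5p20 (T : Type) (G : group_on T) (D : T -> Prop)
  (a b c x y z p q r : T) :
  three_transposition_group G D ->
  symplectic G D ->
  cquad G D a b c x y z ->
  cquad G D a b c p q r ->
  ~ (forall t, six a b c x y z t <-> six a b c p q r t) ->
  let caseA :=
    [/\ coll G D p x /\ coll G D q y /\ coll G D r z,
        ~ coll G D p y /\ ~ coll G D p z /\ ~ coll G D q x /\
        ~ coll G D q z /\ ~ coll G D r x /\ ~ coll G D r y &
        exists w, [/\ fline G D p x w, fline G D q y w, fline G D r z w &
                      ~ coll G D w a /\ ~ coll G D w b /\ ~ coll G D w c]] in
  let caseB :=
    [/\ ~ coll G D p x /\ ~ coll G D q y /\ ~ coll G D r z,
        coll G D p y /\ coll G D p z /\ coll G D q x /\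
        coll G D q z /\ coll G D r x /\ coll G D r y &
        exists d e f,
          [/\ fline G D r y d /\ fline G D q z d,
              fline G D r x e /\ fline G D p z e,
              fline G D q x f /\ fline G D p y f,
              fline G D a e f /\ fline G D b d f /\ fline G D c d e &
              cquad G D a b c d e f]] in
  (caseA /\ ~ caseB) \/ (caseB /\ ~ caseA).
Proof.
move=> _ symp Q1 Q2 ne_quads; cbv zeta.
have ne_px : p <> x.
  move=> px; have [qy rz] := cquad_eq_of_opposite symp Q1 Q2 px.
  by apply: ne_quads; subst.
have [px | npx] := classic (coll G D p x); [left | right]; split.
- exact (case_a_of_coll symp Q1 Q2 px).
- by case=> [[]].
- exact (case_b_of_ncoll symp Q1 Q2 ne_px npx).
- by case=> [[]].
Qed.
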